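(* Let $x,\theta^\star,\check\theta\in\mathbb R^d$ with $\|x\|\le1$, let $\underline V\in\mathbb R^{d\times d}$ be symmetric positive definite with $\underline V\succ\alpha m I_d$ for some $\alpha>0$ and integer $m\ge1$, let $\beta>0$, and let $\eta$ be a mean-zero random vector in $\mathbb R^d$ with $0<\mathbb E\|\eta\|^2<\infty$. Set $\tilde\theta=\check\theta+\beta\underline V^{-1/2}\eta$ and $$\pi=\max[\pi_{\min},\min\{\pi_{\max},\Pr(x^\top\tilde\theta<0)\}],$$ with $0<\pi_{\min}<\pi_{\max}<1$. Let $\pi^\star=\pi_{\min}$ if $x^\top\theta^\star>0$, $\pi^\star=\pi_{\max}$ if $x^\top\theta^\star<0$, and $\pi^\star\in[\pi_{\min},\pi_{\max}]$ arbitrary if $x^\top\theta^\star=0$. Then $(\pi-\pi^\star)x^\top\theta^\star\ge0$ and $$(\pi-\pi^\star)x^\top\theta^\star<\sqrt{\frac{\|\check\theta-\theta^\star\|^2_{\underline V}+\beta^2\mathbb E\|\eta\|^2}{\min(\pi_{\min},1-\pi_{\max})\,\alpha m}}.$$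
   Context: In the paper this is applied conditionally on all information up to and including the context at decision point $(i,t)$, with $x=x_{i,t}$, $\theta^\star=\theta^\star_{i,t}$, $\check\theta=\check\theta_{i,t}$, $\underline V=\underline V_{i,t}$, $m=\min(i,t)$, $\beta=\beta_{i,t}$, and $\pi,\pi^\star$ the algorithm's and the optimal policy's probabilities of the control action. $\|y\|_A=\sqrt{y^\top Ay}$; $\Pr$ is over $\eta$ only. *)

From HB Require Import structures.
From mathcomp Require Import all_boot all_order all_algebra.
From mathcomp Require Import all_classical all_reals all_analysis.
Set Implicit Arguments. Unset Strict Implicit. Unset Printing Implicit Defensive.
Import Order.TTheory GRing.Theory Num.Theory.
Local Open Scope ring_scope.

Definition qform (R : ringType) (d : nat) (A : 'M[R]_d) (v : 'cV[R]_d) : R :=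
  (v^T *m A *m v) 0 0.

Definition sqnorm (R : ringType) (d : nat) (v : 'cV[R]_d) : R := (v^T *m v) 0 0.

Definition spd (R : numDomainType) (d : nat) (A : 'M[R]_d) : Prop :=
  A^T = A /\ forall v : 'cV[R]_d, v != 0 -> 0 < qform A v.

(* W is the (principal) square root of A: W symmetric positive definite with
   W W = A.  For A symmetric positive definite such a W exists and is unique,
   so this is the definition of A^{1/2}. *)
Definition is_sqrtmx (R : numDomainType) (d : nat) (W A : 'M[R]_d) : Prop :=
  spd W /\ W *m W = A.

(* Write [delta = x^T (thtilde - thstar) = x^T (thcheck - thstar) + beta x^T V^{-1/2} eta].
   Since [V >= alpha m I] and [|x| <= 1], Cauchy-Schwarz gives [alpha m (x^T u)^2 <= |u|_V^2]
   for every [u], and [V^{-1/2}] turns [|.|_V] into the Euclidean norm; as [eta] is centred the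
   cross term vanishes, so [alpha m E[delta^2] <= |thcheck - thstar|_V^2 + beta^2 E|eta|^2].
   If [(pi - pistar) x^T thstar > 0], the clipping forces the event "[x^T thtilde] and
   [x^T thstar] have opposite signs" to have probability above [min(pimin, 1 - pimax)], and on
   it [delta^2 >= (x^T thstar)^2]. This bounds [(x^T thstar)^2], and [|pi - pistar| <= 1]. *)

From HB Require Import structures.
From mathcomp Require Import all_boot all_order all_algebra.
From mathcomp Require Import all_classical all_reals all_analysis.
From mathcomp Require Import measurable_realfun.
From mathcomp Require Import ring lra.
Import Order.TTheory GRing.Theory Num.Theory.
Local Open Scope ring_scope.

Section QuadraticForms.
Context {R : realFieldType} {d : nat}.
Implicit Types (u x e : 'cV[R]_d) (V W : 'M[R]_d).

Lemma dotE u x : (u^T *m x) 0 0 = \sum_i u i 0 * x i 0.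
Proof. by rewrite mxE; apply: eq_bigr => i _; rewrite mxE. Qed.

Lemma sqnorm_ge0 u : 0 <= sqnorm u.
Proof. by rewrite /sqnorm dotE; apply: sumr_ge0 => i _; rewrite -expr2 sqr_ge0. Qed.

Lemma sqnormB_scale u x (p : R) :
  sqnorm (u - p *: x) = sqnorm u - 2 * p * (x^T *m u) 0 0 + p ^+ 2 * sqnorm x.
Proof.
rewrite /sqnorm !dotE !mulr_sumr -sumrB -big_split /=.
by apply: eq_bigr => i _; rewrite !mxE; ring.
Qed.

(* Expand [0 <= |u - p x|^2] at [p = x^T u]. *)
Lemma dot_sqr_le_sqnorm x u : sqnorm x <= 1 -> ((x^T *m u) 0 0) ^+ 2 <= sqnorm u.
Proof.
move=> x_le1; set p := (x^T *m u) 0 0.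
have := sqnorm_ge0 (u - p *: x); rewrite sqnormB_scale -/p.
have : p ^+ 2 * sqnorm x <= p ^+ 2 by rewrite ler_piMr ?sqr_ge0.
nra.
Qed.

Lemma qformB_scalar V (a : R) u : qform (V - a%:M) u = qform V u - a * sqnorm u.
Proof.
by rewrite /qform /sqnorm mulmxBr mulmxBl mul_mx_scalar -scalemxAl !mxE.
Qed.

Lemma spd_qform_ge0 V u : spd V -> 0 <= qform V u.
Proof.
move=> [_ V_pos]; have [->|u_neq0] := eqVneq u 0; last exact/ltW/V_pos.
by rewrite /qform mulmx0 mxE.
Qed.

Lemma dot_sqr_le_qform x V (a : R) u :
  sqnorm x <= 1 -> 0 <= a -> spd (V - a%:M) ->
  a * ((x^T *m u) 0 0) ^+ 2 <= qform V u.
Proof.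
move=> x_le1 a_ge0 /(spd_qform_ge0 _ u); rewrite qformB_scalar subr_ge0.
by apply: le_trans; rewrite ler_wpM2l // dot_sqr_le_sqnorm.
Qed.

Lemma spd_unitmx V : spd V -> V \in unitmx.
Proof.
move=> [_ V_pos]; rewrite -row_free_unit -kermx_eq0; apply/eqP/row_matrixP => i.
rewrite row0; apply/eqP/negPn/negP => r_neq0.
have rV0 : row i (kermx V) *m V = 0 by rewrite -row_mul mulmx_ker row0.
have := V_pos (row i (kermx V))^T; rewrite trmx_eq0 r_neq0 => /(_ isT).
by rewrite /qform trmxK rV0 mul0mx mxE ltxx.
Qed.

(* [W] commutes with [V^-1 = W W], hence with [V]. *)
Lemma sqrtmx_inv_conj V W : spd V -> is_sqrtmx W (invmx V) -> W *m V *m W = 1%:M.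
Proof.
move=> /spd_unitmx V_unit [_ WW].
have W_invV : W *m invmx V = invmx V *m W by rewrite -WW mulmxA.
have WV : W *m V = V *m W.
  rewrite -[RHS]mulmx1 -(mulVmx V_unit) !mulmxA -(mulmxA V W) W_invV !mulmxA.
  by rewrite (mulmxV V_unit) mul1mx.
by rewrite WV -mulmxA WW (mulmxV V_unit).
Qed.

Lemma qform_sqrtmx_inv V W e :
  spd V -> is_sqrtmx W (invmx V) -> qform V (W *m e) = sqnorm e.
Proof.
move=> V_spd W_sqrt; have [[Wt _] _] := W_sqrt.
rewrite /qform /sqnorm trmx_mul Wt -!mulmxA (mulmxA W V) (mulmxA (W *m V)).
by rewrite sqrtmx_inv_conj // mul1mx.
Qed.

Lemma dot_sqrtmx_inv_sqr_le x V W (a : R) e :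
  sqnorm x <= 1 -> 0 <= a -> spd V -> spd (V - a%:M) -> is_sqrtmx W (invmx V) ->
  a * ((x^T *m W *m e) 0 0) ^+ 2 <= sqnorm e.
Proof.
move=> x_le1 a_ge0 V_spd Va_spd W_sqrt.
by rewrite -(qform_sqrtmx_inv _ _ e V_spd W_sqrt) -mulmxA dot_sqr_le_qform.
Qed.

Lemma dot_perturbE x (th0 th : 'cV[R]_d) W e (beta : R) :
  (x^T *m (th + beta *: (W *m e))) 0 0 =
    (x^T *m th0) 0 0 + ((x^T *m (th - th0)) 0 0 + beta * (x^T *m W *m e) 0 0).
Proof.
rewrite mulmxDr -scalemxAr mulmxA mulmxBr [in LHS]mxE [X in _ + X = _]mxE.
by rewrite [X in _ = _ + (X + _)]mxE [X in _ = _ + (_ + X + _)]mxE; ring.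
Qed.

End QuadraticForms.

Section Clipping.
Context {R : realDomainType} {pimin pimax pistar pr xth : R}.
Hypotheses (pimin_lt_pimax : pimin < pimax)
  (pistar_pos : 0 < xth -> pistar = pimin) (pistar_neg : xth < 0 -> pistar = pimax)
  (pistar_0 : xth = 0 -> pimin <= pistar <= pimax).
Let pi := Num.max pimin (Num.min pimax pr).

Lemma pi_itv : pimin <= pi <= pimax.
Proof. by rewrite /pi le_max lexx /= ge_max (ltW pimin_lt_pimax) /= ge_min lexx. Qed.

Lemma pistar_itv : pimin <= pistar <= pimax.
Proof.
case: (ltgtP xth 0) => [/pistar_neg|/pistar_pos|/pistar_0] // ->.
  by rewrite (ltW pimin_lt_pimax) lexx.
by rewrite (ltW pimin_lt_pimax) lexx.
Qed.

Lemma policy_gap_ge0 : 0 <= (pi - pistar) * xth.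
Proof.
have /andP[? ?] := pi_itv.
case: (ltgtP xth 0) => [xth_lt0|xth_gt0|->]; last by rewrite mulr0.
  by rewrite pistar_neg // nmulr_lge0 // subr_le0.
by rewrite pistar_pos // pmulr_lge0 // subr_ge0.
Qed.

Lemma policy_gap_le_norm : 0 <= pimin -> pimax <= 1 -> (pi - pistar) * xth <= `|xth|.
Proof.
move=> pimin_ge0 pimax_le1; apply: le_trans (ler_norm _) _.
rewrite normrM ler_piMl // ler_norml.
move: pi_itv pistar_itv => /andP[? ?] /andP[? ?]; apply/andP; split; lra.
Qed.

Lemma policy_gap_gt0 : 0 < (pi - pistar) * xth ->
  (0 < xth /\ Num.min pimin (1 - pimax) < pr) \/
  (xth < 0 /\ Num.min pimin (1 - pimax) < 1 - pr).
Proof.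
set c := Num.min pimin (1 - pimax).
have c_le : c <= pimin /\ c <= 1 - pimax by rewrite !ge_min !lexx ?orbT.
case: (ltgtP xth 0) => [xth_lt0|xth_gt0|->]; last by rewrite mulr0 ltxx.
  rewrite pistar_neg // (nmulr_lgt0 _ xth_lt0) subr_lt0 /pi gt_max pimin_lt_pimax.
  by rewrite gt_min ltxx /= => pr_lt; right; split => //; lra.
rewrite pistar_pos // (pmulr_lgt0 _ xth_gt0) subr_gt0 /pi lt_max ltxx lt_min.
by rewrite pimin_lt_pimax /= => pr_gt; left; split => //; lra.
Qed.

End Clipping.

Section IntegralBounds.
Context {dT : measure_display} {T : measurableType dT} {R : realType}.
Variable mu : {measure set T -> \bar R}.

Lemma integral_ge_measure (E : set T) (f : T -> R) (y : R) :
  measurable E -> measurable_fun setT f -> (forall t, 0 <= f t) -> 0 <= y ->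
  (forall t, E t -> y <= f t) -> (y%:E * mu E <= \int[mu]_t (f t)%:E)%E.
Proof.
move=> mE mf f_ge0 y_ge0 y_le_f.
have mEf : measurable_fun setT (EFin \o f) by exact/measurable_EFinP.
rewrite -(integral_cst mu mE).
apply: le_trans (ge0_subset_integral mu mE measurableT mEf _ (subsetT E)); last first.
  by move=> t _; rewrite lee_fin.
apply: ge0_le_integral => //; exact: measurable_funS mEf.
Qed.

Section DominatedSquare.
Context {b s : T -> R} {a : R}.
Hypotheses (a_gt0 : 0 < a) (mb : measurable_fun setT b)
  (s_int : mu.-integrable setT (fun t => (s t)%:E))
  (sqr_le : forall t, a * b t ^+ 2 <= s t).

Lemma integrable_dominated_sqr : mu.-integrable setT (fun t => (b t ^+ 2)%:E).
Proof.
apply: (le_integrable measurableT _ _ (integrableZl measurableT a^-1 s_int)).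
  exact/measurable_EFinP/measurable_funM.
move=> t _; have s_ge0 : 0 <= s t.
  by apply: le_trans (sqr_le t); rewrite mulr_ge0 ?sqr_ge0 ?ltW.
rewrite -EFinM !abse_EFin lee_fin ger0_norm ?sqr_ge0 // ger0_norm.
  by rewrite ler_pdivlMl.
by rewrite mulr_ge0 // invr_ge0 ltW.
Qed.

Lemma integral_dominated_sqr :
  (a%:E * \int[mu]_t (b t ^+ 2)%:E <= \int[mu]_t (s t)%:E)%E.
Proof.
rewrite -integralZl //; last exact: integrable_dominated_sqr.
apply: le_integral => //; first exact/integrableZl/integrable_dominated_sqr.
by move=> t _; rewrite -EFinM lee_fin.
Qed.

End DominatedSquare.
End IntegralBounds.

Section Probability.
Context {dT : measure_display} {T : measurableType dT} {R : realType}.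
Variable P : probability T R.

Lemma integral_affine_sqr (b : T -> R) (k s : R) :
  P.-integrable setT (fun t => (b t)%:E) -> (\int[P]_t (b t)%:E = 0)%E ->
  P.-integrable setT (fun t => (b t ^+ 2)%:E) ->
  (\int[P]_t ((k + s * b t) ^+ 2)%:E =
    (k ^+ 2)%:E + (s ^+ 2)%:E * \int[P]_t (b t ^+ 2)%:E)%E.
Proof.
move=> b_int b_mean0 b2_int.
have cst_int (r : R) : P.-integrable setT (fun t => r%:E).
  exact: finite_measure_integrable_cst.
rewrite (eq_integral (fun t => (k ^+ 2)%:E +
    ((2 * k * s)%:E * (b t)%:E + (s ^+ 2)%:E * (b t ^+ 2)%:E)))%E; last first.
  by move=> t _; rewrite -!EFinM -!EFinD; congr EFin; ring.
rewrite integralD //; last by apply: integrableD => //; exact: integrableZl.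
rewrite integralD //; try exact: integrableZl.
rewrite !integralZl // b_mean0 mule0 add0e integral_cst //=.
by rewrite probability_setT mule1.
Qed.

Lemma sign_mismatch_event (g : T -> R) (y c : R) :
  measurable_fun setT g ->
  (0 < y /\ c < fine (P [set t | g t < 0]%classic)) \/
    (y < 0 /\ c < 1 - fine (P [set t | g t < 0]%classic)) ->
  exists E, [/\ measurable E, (c%:E < P E)%E & forall t, E t -> y * g t <= 0].
Proof.
set A := [set t | g t < 0]%classic => mg y_sign.
have mA : measurable A.
  rewrite -[A]setTI (_ : A = g @^-1` `]-oo, 0[)%classic; first exact: mg.
  by apply/seteqP; split => t /=; rewrite in_itv.
have PA : P A = (fine (P A))%:E.
  rewrite fineK // ge0_fin_numE ?measure_ge0 //.
  exact: le_lt_trans (probability_le1 P mA) (ltey _).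
case: y_sign => [[y_gt0 c_lt]|[y_lt0 c_lt]].
- exists A; split => //; first by rewrite PA lte_fin.
  by move=> t gt_lt0; rewrite pmulr_rle0 // ltW.
- exists (~` A)%classic; split; first exact: measurableC.
    by rewrite probability_setC // PA -EFinB lte_fin.
  by move=> t /= /negP; rewrite -leNgt => g_ge0; rewrite nmulr_rle0.
Qed.

(* On the event where [y + delta] and [y] have opposite signs, [y^2 <= delta^2]. *)
Lemma sqr_mul_lt_second_moment (delta : T -> R) (y c : R) :
  measurable_fun setT delta ->
  (0 < y /\ c < fine (P [set t | y + delta t < 0]%classic)) \/
    (y < 0 /\ c < 1 - fine (P [set t | y + delta t < 0]%classic)) ->
  ((y ^+ 2 * c)%:E < \int[P]_t (delta t ^+ 2)%:E)%E.
Proof.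
move=> mdelta y_sign.
have y_neq0 : y != 0 by case: y_sign => -[y_s _]; [rewrite gt_eqF | rewrite lt_eqF].
have y2_gt0 : 0 < y ^+ 2 by rewrite exprn_even_gt0.
have mg : measurable_fun setT (fun t => y + delta t).
  exact: measurable_funD (measurable_cst _) mdelta.
have [E [mE c_lt sign]] := sign_mismatch_event _ _ _ mg y_sign.
apply: lt_le_trans
  (@integral_ge_measure _ _ _ P E (fun t => delta t ^+ 2) (y ^+ 2) mE _ _ (ltW y2_gt0) _).
- by rewrite EFinM lte_pmul2l.
- exact: measurable_funM.
- by move=> t; rewrite sqr_ge0.
- by move=> t /sign; nra.
Qed.

Section AffineSecondMoment.
Context {b s : T -> R} {a k beta q : R}.
Hypotheses (a_gt0 : 0 < a) (mb : measurable_fun setT b)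
  (b_int : P.-integrable setT (fun t => (b t)%:E)) (b_mean0 : (\int[P]_t (b t)%:E = 0)%E)
  (s_int : P.-integrable setT (fun t => (s t)%:E))
  (b_dom : forall t, a * b t ^+ 2 <= s t) (k_le : a * k ^+ 2 <= q).

Lemma affine_second_moment_le : (\int[P]_t ((k + beta * b t) ^+ 2)%:E <=
  ((q + beta ^+ 2 * fine (\int[P]_t (s t)%:E)) / a)%:E)%E.
Proof.
have b2_int := integrable_dominated_sqr P a_gt0 mb s_int b_dom.
have sE : (\int[P]_t (s t)%:E)%E = (fine (\int[P]_t (s t)%:E))%:E.
  by rewrite fineK // integrable_fin_num.
have := integral_dominated_sqr P a_gt0 mb s_int b_dom.
rewrite integral_affine_sqr // [in X in _ -> X]sE.
rewrite -(fineK (integrable_fin_num measurableT b2_int)) sE.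
set B := fine _; set S := fine _.
rewrite -!EFinM -EFinD !lee_fin ler_pdivlMr //= => B_le.
rewrite mulrDl mulrC -mulrA [B * a]mulrC.
by apply: lerD => //; apply: ler_wpM2l; rewrite ?sqr_ge0.
Qed.

End AffineSecondMoment.

End Probability.

Section MeanZeroVector.
Context {dT : measure_display} {T : measurableType dT} {R : realType}.
Context {P : probability T R} {d : nat} {eta : T -> 'cV[R]_d}.
Hypotheses (eta_meas : forall i, measurable_fun setT (fun t => eta t i 0))
  (eta_int : forall i, P.-integrable setT (fun t => (eta t i 0)%:E))
  (eta_mean0 : forall i, (\int[P]_t (eta t i 0)%:E = 0)%E).

Lemma measurable_sqnorm : measurable_fun setT (fun t => sqnorm (eta t)).
Proof.
rewrite (_ : (fun t => _) = fun t => \sum_i eta t i 0 * eta t i 0).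
  by apply: measurable_sum => i; exact: measurable_funM.
by apply/funext => t; rewrite /sqnorm dotE.
Qed.

Lemma integrable_sqnorm :
  (\int[P]_t (sqnorm (eta t))%:E < +oo)%E ->
  P.-integrable setT (fun t => (sqnorm (eta t))%:E).
Proof.
move=> sqnorm_fin; apply/integrableP; split; first exact/measurable_EFinP/measurable_sqnorm.
rewrite (eq_integral (fun t => (sqnorm (eta t))%:E)) // => t _.
by rewrite abse_EFin ger0_norm ?sqnorm_ge0.
Qed.

Lemma EFin_row_mulE (w : 'rV[R]_d) :
  (fun t => ((w *m eta t) 0 0)%:E) = (fun t => \sum_i (w 0 i)%:E * (eta t i 0)%:E)%E.
Proof. by apply/funext => t; rewrite mxE -sumEFin; under eq_bigr do rewrite EFinM. Qed.

Lemma measurable_row_mul (w : 'rV[R]_d) : measurable_fun setT (fun t => (w *m eta t) 0 0).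
Proof.
rewrite (_ : (fun t => _) = fun t => \sum_i w 0 i * eta t i 0).
  by apply: measurable_sum => i; exact: measurable_funM.
by apply/funext => t; rewrite mxE.
Qed.

Lemma integrable_row_mul (w : 'rV[R]_d) :
  P.-integrable setT (fun t => ((w *m eta t) 0 0)%:E).
Proof. by rewrite EFin_row_mulE; apply: integrable_sum => // i _; exact: integrableZl. Qed.

Lemma integral_row_mul (w : 'rV[R]_d) : (\int[P]_t ((w *m eta t) 0 0)%:E = 0)%E.
Proof.
rewrite EFin_row_mulE integral_sum //; last by move=> i; exact: integrableZl.
by apply: big1 => i _; rewrite integralZl // eta_mean0 mule0.
Qed.

End MeanZeroVector.

Theorem lemmaE14 (dT : measure_display) (T : measurableType dT) (R : realType)
  (P : probability T R) (d : nat)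
  (x thstar thcheck : 'cV[R]_d) (V W : 'M[R]_d) (alpha beta : R) (m : nat)
  (eta : T -> 'cV[R]_d) (pimin pimax pistar : R) :
  sqnorm x <= 1 ->
  spd V ->
  0 < alpha -> (1 <= m)%N ->
  spd (V - (alpha * m%:R)%:M) ->
  0 < beta ->
  (* W = V^{-1/2} *)
  is_sqrtmx W (invmx V) ->
  (* eta is a random vector with mean zero *)
  (forall i : 'I_d, measurable_fun setT (fun t => eta t i 0)) ->
  (forall i : 'I_d, P.-integrable setT (fun t => (eta t i 0)%:E)) ->
  (forall i : 'I_d, (\int[P]_t (eta t i 0)%:E = 0)%E) ->
  (* 0 < E ||eta||^2 < oo *)
  (0 < \int[P]_t (sqnorm (eta t))%:E)%E ->
  (\int[P]_t (sqnorm (eta t))%:E < +oo)%E ->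
  0 < pimin -> pimin < pimax -> pimax < 1 ->
  let xth := (x^T *m thstar) 0 0 in
  (0 < xth -> pistar = pimin) ->
  (xth < 0 -> pistar = pimax) ->
  (xth = 0 -> pimin <= pistar <= pimax) ->
  let thtilde := fun t => thcheck + beta *: (W *m eta t) in
  let pr := fine (P [set t : T | (x^T *m thtilde t) 0 0 < 0]%classic) in
  let pi := Num.max pimin (Num.min pimax pr) in
  let Eeta2 := fine (\int[P]_t (sqnorm (eta t))%:E) in
  0 <= (pi - pistar) * xth /\
  (pi - pistar) * xth <
    Num.sqrt ((qform V (thcheck - thstar) + beta ^+ 2 * Eeta2)
              / (Num.min pimin (1 - pimax) * alpha * m%:R)).
Proof.
move=> x_le1 V_spd alpha_gt0 m_ge1 Vam_spd beta_gt0 W_sqrt eta_meas eta_int eta_mean0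
  Eeta2_gt0 Eeta2_fin pimin_gt0 pimin_lt_pimax pimax_lt1 xth pistar_pos pistar_neg
  pistar_0 thtilde pr pi Eeta2.
set am := alpha * m%:R; set c := Num.min pimin (1 - pimax).
set q := qform V (thcheck - thstar).
have am_gt0 : 0 < am by rewrite mulr_gt0 // ltr0n.
have c_gt0 : 0 < c by rewrite lt_min pimin_gt0 subr_gt0.
have S_gt0 : 0 < (q + beta ^+ 2 * Eeta2) / (c * alpha * m%:R).
  rewrite divr_gt0 ?mulr_gt0 ?ltr0n // ltr_wpDl ?spd_qform_ge0 // mulr_gt0 ?exprn_gt0 //.
  by apply: fine_gt0; rewrite Eeta2_gt0 Eeta2_fin.
split; first exact: policy_gap_ge0.
have [gap_le0|gap_gt0] := leP ((pi - pistar) * xth) 0.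
  by apply: le_lt_trans gap_le0 _; rewrite sqrtr_gt0.
apply: le_lt_trans (policy_gap_le_norm (pr := pr) pimin_lt_pimax pistar_pos pistar_neg
  pistar_0 (ltW pimin_gt0) (ltW pimax_lt1)) _.
rewrite -sqrtr_sqr ltr_sqrt //.
pose b t := ((x^T *m W) *m eta t) 0 0.
set k := (x^T *m (thcheck - thstar)) 0 0.
have prE : pr = fine (P [set t | xth + (k + beta * b t) < 0]%classic).
  rewrite /pr; congr (fine (P _)); apply/funext => t.
  by rewrite /thtilde /= (dot_perturbE x thstar).
have k_le : am * k ^+ 2 <= q by apply: dot_sqr_le_qform => //; exact: ltW.
have b_dom t : am * b t ^+ 2 <= sqnorm (eta t).
  by apply: (@dot_sqrtmx_inv_sqr_le _ _ x V W) => //; exact: ltW.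
have mb : measurable_fun setT b := measurable_row_mul eta_meas (x^T *m W).
have lower : ((xth ^+ 2 * c)%:E < \int[P]_t ((k + beta * b t) ^+ 2)%:E)%E.
  apply: sqr_mul_lt_second_moment.
    exact: measurable_funD (measurable_cst _) (measurable_funM (measurable_cst _) mb).
  by rewrite -prE; exact: policy_gap_gt0 gap_gt0.
have := lt_le_trans lower (affine_second_moment_le P am_gt0 mb (integrable_row_mul eta_int _)
  (integral_row_mul eta_int eta_mean0 _) (integrable_sqnorm eta_meas Eeta2_fin) b_dom k_le).
rewrite lte_fin -/Eeta2 ltr_pdivlMr // => moment.
by rewrite ltr_pdivlMr ?mulr_gt0 ?ltr0n // -mulrA -/am mulrA.
Qed.
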